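(* Suppose every class $c\in[C]$ uses a revision protocol $\rho^c$ that is either imitative via comparison, excess payoff, or pairwise comparison. If a solution of the evolutionary dynamics (E) with initial condition in the relative interior of $X$ (i.e. $\mu^c[s,u](0)>0$ for all $c,s,u$) converges to $\mu^\star$, then $\mu^\star$ is an MSNE.
   Context: Setting. There are $C$ classes of players, $[C]=\{1,\dots,C\}$. For each class $c\in[C]$: $\mathcal S^c$ is a finite state set with $p^c$ elements; for each $s\in\mathcal S^c$, $\mathcal A^c(s)$ is a nonempty finite action set; $\phi^c(\cdot\mid s,a)$ is a probability distribution on $\mathcal S^c$ for each $s\in\mathcal S^c$, $a\in\mathcal A^c(s)$; $\mathcal U^c_D$ is a finite set of $n^c$ deterministic stationary policies, each $u\in\mathcal U^c_D$ assigning to every $s$ a point mass $u(\cdot\mid s)$ on some action of $\mathcal A^c(s)$; $m^c>0$ is the mass of class $c$; $R^c_d>0$ is the state-transition rate. Let $n=\sum_c n^c$. For $u\in\mathcal U^c_D$ put $\phi^{c,u}(s\mid s')=\sum_{a'\in\mathcal A^c(s')}\phi^c(s\mid s',a')u(a'\mid s')$; standing assumption: the Markov chain on $\mathcal S^c$ with kernel $\phi^{c,u}$ has a unique recurrent communicating class, hence a unique stationary distribution $\eta^{c,u}$. The population state is $\mu=(\mu^c)_{c\in[C]}\in X:=\prod_c X^c$, where $X^c=\{\mu^c\in\mathbb R_{\ge0}^{\mathcal S^c\times\mathcal U^c_D}:\sum_{s,u}\mu^c[s,u]=m^c\}$; write $\mu^c[\mathcal S^c,u]:=\sum_{s\in\mathcal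 S^c}\mu^c[s,u]$ and $\mu^c[\mathcal S^c,\cdot]\in\mathbb R^{n^c}_{\ge0}$ for the vector of these. A payoff map $F=(F^c)_{c\in[C]}$ is given, with $F^c$ continuously differentiable on an open neighborhood of $X$ and valued in $\mathbb R^{\mathcal U^c_D}$ ($F^c_u(\mu)$ is the payoff of policy $u$ for class $c$). Each class has a revision protocol $\rho^c=(\rho^c_{uv})_{u,v\in\mathcal U^c_D}$, a Lipschitz continuous map $\mathbb R^{n^c}\times\mathbb R^{n^c}_{\ge0}\to\mathbb R^{n^c\times n^c}_{\ge0}$ whose first argument is a payoff vector and second a policy distribution. The evolutionary dynamics (E) are the ODE on $X$: for all $c\in[C]$, $s\in\mathcal S^c$, $u\in\mathcal U^c_D$, $\dot\mu^c[s,u]=f^{c,d}_{s,u}(\mu)+f^{c,r}_{s,u}(\mu)$, where $f^{c,d}_{s,u}(\mu)=R^c_d\sum_{s'\in\mathcal S^c}\sum_{a'\in\mathcal A^c(s')}\phi^c(s\mid s',a')u(a'\mid s')\mu^c[s',u]-R^c_d\mu^c[s,u]$ and $f^{c,r}_{s,u}(\mu)=\sum_{u'\in\mathcal U^c_D}\mu^c[s,u']\rho^c_{u'u}(F^c(\mu),\mu^c[\mathcal S^c,\cdot])-\mu^c[s,u]\sum_{u'\in\mathcal U^c_D}\rho^c_{uu'}(F^c(\mu),\mu^c[\mathcal S^c,\cdot])$. Solutions from $X$ exist, are unique and remain in $X$. A state $\mu\in X$ is a mixed stationary Nash equilibrium (MSNE) if for every $c\in[C]$: (a) for all $u\in\mathcal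 U^c_D$, $\mu^c[\mathcal S^c,u]>0\Rightarrow F^c_u(\mu)\ge F^c_v(\mu)$ for all $v\in\mathcal U^c_D$; and (b) $f^{c,d}_{s,u}(\mu)=0$ for all $s\in\mathcal S^c,u\in\mathcal U^c_D$. $\mathrm{MSNE}(F,\phi)$ denotes the set of MSNE. Protocol families (for class $c$; $\pi\in\mathbb R^{n^c}$ a payoff vector, $x\in\mathbb R^{n^c}_{\ge0}$ a policy distribution of total mass $m^c$): - imitative: $\rho^c_{uv}(\pi,x)=\frac{x_v}{m^c}r^c_{uv}(\pi,x)$ with $r^c\ge0$ Lipschitz and monotone net conditional imitation rates: for all $u,v,w$, $\pi_v\ge\pi_u\iff r^c_{wv}(\pi,x)-r^c_{vw}(\pi,x)\ge r^c_{wu}(\pi,x)-r^c_{uw}(\pi,x)$; - imitative via comparison: an imitative protocol with $r^c_{uv}(\pi,x)=\varphi^c(\pi_v-\pi_u)$, where $\varphi^c$ is Lipschitz, $\varphi^c(d)=0$ for $d\le0$ and $\varphi^c(d)>0$ for $d>0$; - excess payoff: $\rho^c_{uv}(\pi,x)=\tau^c_v(\hat\pi)$ with $\hat\pi_v=\pi_v-\frac1{m^c}\sum_w x_w\pi_w$, $\tau^c:\mathbb R^{n^c}\to\mathbb R^{n^c}_{\ge0}$ Lipschitz and $\tau^c(\hat\pi)^\top\hat\pi>0$ whenever $\hat\pi$ has a positive component; it is separable if $\tau^c_v(\hat\pi)=\tau^c_v(\hat\pi_v)$ depends only on $\hat\pi_v$, with $\tau^c_v(d)>0\iff d>0$; -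 pairwise comparison: $\rho^c_{uv}(\pi,x)=\rho^c_{uv}(\pi)$ independent of $x$, Lipschitz, with $\rho^c_{uv}(\pi)>0\iff\pi_v>\pi_u$; it is impartial if $\rho^c_{uv}(\pi)=\varphi^c_v(\pi_v-\pi_u)$ for some functions $\varphi^c_v$. *)

From HB Require Import structures.
From mathcomp Require Import all_boot all_order all_algebra.
From mathcomp Require Import all_classical all_reals all_analysis.
Unset Printing Implicit Defensive.
Import Order.TTheory GRing.Theory Num.Theory.
Import numFieldNormedType.Exports.
Local Open Scope classical_set_scope.
Local Open Scope ring_scope.

Section Vec.
Context {R : realType}.

Definition supn {T : finType} (x : T -> R) : R := \big[Num.max/0]_(i : T) `|x i|.

Definition nonnegv {T : finType} (x : T -> R) : Prop := forall w, 0 <= x w.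

Definition simplexv {T : finType} (mc : R) (x : T -> R) : Prop :=
  nonnegv x /\ \sum_(w : T) x w = mc.

Definition lipschitz2 {T : finType} (g : (T -> R) -> (T -> R) -> T -> T -> R) : Prop :=
  exists L : R, forall pi pi' x x', nonnegv x -> nonnegv x' -> forall u v,
    `|g pi x u v - g pi' x' u v| <= L * (supn (fun w => pi w - pi' w) + supn (fun w => x w - x' w)).

Definition lipschitzV {T : finType} (g : (T -> R) -> T -> R) : Prop :=
  exists L : R, forall p p' v, `|g p v - g p' v| <= L * supn (fun w => p w - p' w).

Definition lipschitzM {T : finType} (g : (T -> R) -> T -> T -> R) : Prop :=
  exists L : R, forall p p' u v, `|g p u v - g p' u v| <= L * supn (fun w => p w - p' w).

Definition lipschitz1 (g : R -> R) : Prop :=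
  exists L : R, forall a b, `|g a - g b| <= L * `|a - b|.

(* rho pi x u v = rho_{uv}(pi, x) *)

Definition revision_protocol {T : finType} (rho : (T -> R) -> (T -> R) -> T -> T -> R) : Prop :=
  lipschitz2 rho /\ (forall pi x, nonnegv x -> forall u v, 0 <= rho pi x u v).

Definition imitative_with {T : finType} (mc : R) (rho r : (T -> R) -> (T -> R) -> T -> T -> R) : Prop :=
  [/\ forall pi x, nonnegv x -> forall u v, 0 <= r pi x u v,
      lipschitz2 r,
      forall pi x, nonnegv x -> forall u v w,
        (pi u <= pi v) <-> (r pi x w u - r pi x u w <= r pi x w v - r pi x v w) &
      forall pi x, simplexv mc x -> forall u v, rho pi x u v = x v / mc * r pi x u v].

Definition imitative {T : finType} (mc : R) (rho : (T -> R) -> (T -> R) -> T -> T -> R) : Prop :=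
  exists r, imitative_with mc rho r.

Definition imitative_comparison {T : finType} (mc : R) (rho : (T -> R) -> (T -> R) -> T -> T -> R) : Prop :=
  exists varphi : R -> R,
    [/\ lipschitz1 varphi,
        forall d, d <= 0 -> varphi d = 0,
        forall d, 0 < d -> 0 < varphi d &
        imitative_with mc rho (fun pi _ u v => varphi (pi v - pi u))].

Definition excess_payoff {T : finType} (mc : R) (rho : (T -> R) -> (T -> R) -> T -> T -> R) : Prop :=
  exists tau : (T -> R) -> T -> R,
    [/\ lipschitzV tau,
        forall p v, 0 <= tau p v,
        forall p, (exists v, 0 < p v) -> 0 < \sum_(v : T) tau p v * p v &
        forall pi x, simplexv mc x -> forall u v,
          rho pi x u v = tau (fun w => pi w - (\sum_(w' : T) x w' * pi w') / mc) v].

Definition pairwise_comparison {T : finType} (rho : (T -> R) -> (T -> R) -> T -> T -> R) : Prop :=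
  exists r : (T -> R) -> T -> T -> R,
    [/\ lipschitzM r,
        forall pi u v, 0 < r pi u v <-> pi u < pi v &
        forall pi x, nonnegv x -> forall u v, rho pi x u v = r pi u v].

End Vec.

Section Model.
Context {R : realType} {C : finType} {S : C -> finType} {U : C -> finType}.

Definition idx : finType := {c : C & (S c * U c)%type}.

(* population states live in R^{sum_c S^c x U^c}, encoded as row vectors *)
Definition pstate := 'rV[R]_#|idx|.

Definition mu_at (x : pstate) (c : C) (s : S c) (u : U c) : R :=
  x ord0 (enum_rank (@Tagged C c (fun c => (S c * U c)%type) (s, u))).

Definition pmass (x : pstate) (c : C) (u : U c) : R := \sum_(s : S c) mu_at x c s u.

Context {A : forall c, S c -> finType}
        (pol : forall c, U c -> forall s : S c, A c s)
        (phi : forall c (s' : S c), A c s' -> S c -> R)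
        (m Rd : C -> R).

Definition upol c (u : U c) (s : S c) (a : A c s) : R := (a == pol c u s)%:R.

Definition phiu c (u : U c) (s s' : S c) : R :=
  \sum_(a : A c s') phi c s' a s * upol c u s' a.

Definition stationary c (u : U c) (eta : S c -> R) : Prop :=
  nonnegv eta /\ \sum_(s : S c) eta s = 1 /\
  forall s, eta s = \sum_(s' : S c) phiu c u s s' * eta s'.

Definition in_X (x : pstate) : Prop :=
  (forall c s u, 0 <= mu_at x c s u) /\
  (forall c, \sum_(s : S c) \sum_(u : U c) mu_at x c s u = m c).

Context (F : forall c, pstate -> U c -> R)
        (rho : forall c, (U c -> R) -> (U c -> R) -> U c -> U c -> R).

Definition f_d (x : pstate) c (s : S c) (u : U c) : R :=
  Rd c * (\sum_(s' : S c) \sum_(a : A c s') phi c s' a s * upol c u s' a * mu_at x c s' u)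
  - Rd c * mu_at x c s u.

Definition f_r (x : pstate) c (s : S c) (u : U c) : R :=
  \sum_(u' : U c) mu_at x c s u' * rho c (F c x) (pmass x c) u' u
  - mu_at x c s u * \sum_(u' : U c) rho c (F c x) (pmass x c) u u'.

Definition vfield (x : pstate) : pstate :=
  \row_(i < #|idx|) (let p := enum_val i in
     f_d x (tag p) (tagged p).1 (tagged p).2 + f_r x (tag p) (tagged p).1 (tagged p).2).

Definition MSNE (x : pstate) : Prop :=
  in_X x /\
  forall c,
    (forall u, 0 < pmass x c u -> forall v, F c x v <= F c x u) /\
    (forall s u, f_d x c s u = 0).

Definition C1_near_X : Prop :=
  exists O : set pstate, open O /\ in_X `<=` O /\
    forall c (u : U c),
      (forall x, O x -> differentiable (fun y => F c y u) x) /\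
      (forall (v x : pstate), O x ->
         {for x, continuous (fun y => 'D_v (fun z => F c z u) y)}).

End Model.
Arguments idx {C} S U.
Arguments pstate R {C} S U.

From HB Require Import structures.
From mathcomp Require Import all_boot all_order all_algebra.
From mathcomp Require Import all_classical all_reals all_analysis.
From mathcomp Require Import ring lra.
Import Order.TTheory GRing.Theory Num.Theory.
Import numFieldNormedType.Exports.
Local Open Scope classical_set_scope.
Local Open Scope ring_scope.

(* A limit point of a solution is a rest point of (E): a convergent trajectory whose
   derivative converges must have a vanishing limit derivative.  Summing the rest-point
   equations over states kills the Markov part [f_d], because [phi] is stochastic, and
   leaves a balance of revision flows for the policy marginals [x = mu[S, .]].  For
   pairwise comparison and excess payoff protocols this balance alone forces the Nash
   property.  Imitative protocols need the interior start: an unused best reply [v] at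
   the limit would have a marginal [x_v] with [x_v' = x_v * G], [G] tending to a positive
   limit, so [x_v], positive at small times, would eventually increase and could not tend
   to [0].  At a Nash limit no used policy switches to another one, so [f_r = 0] and then
   [f_d = 0]. *)

Section RealAnalysis.
Context {R : realType}.

Lemma ger0_is_derive_le (f df : R -> R) (a b : R) : 0 < a -> a <= b ->
  (forall t : R, 0 < t -> is_derive t 1 f (df t)) ->
  (forall t : R, a <= t -> t <= b -> 0 <= df t) -> f a <= f b.
Proof.
move=> a0 ab fdf dfge0.
have fdv t : 0 < t -> derivable f t 1 by move=> /fdf [].
apply: (@ger0_derive1_ndecr R f a b) => //.
- by move=> x; rewrite in_itv /= => /andP[ax _]; apply: fdv; exact: lt_trans ax.
- move=> x; rewrite in_itv /= => /andP[ax xb].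
  have := fdf x (lt_trans a0 ax) => fdfx; rewrite derive1E derive_val.
  exact: dfge0 (ltW ax) (ltW xb).
- apply: derivable_within_continuous => x; rewrite in_itv /= => /andP[ax _].
  by apply: fdv; exact: lt_le_trans ax.
Qed.

Lemma near_pinfty_gt (P : R -> Prop) (M : R) :
  (forall t, M < t -> P t) -> \forall t \near +oo, P t.
Proof. by move=> h; exists M; split => //; exact: num_real. Qed.

Lemma near_pinftyP (P : R -> Prop) :
  (\forall t \near +oo, P t) -> exists M, forall t, M < t -> P t.
Proof. by case=> M [_ HM]; exists M. Qed.

(* Eventually the slope exceeds [L / 2 > 0], so [g] grows linearly and cannot converge. *)
Lemma is_derive_cvg_pinfty_le0 (g dg : R -> R) (l L : R) :
  (forall t : R, 0 < t -> is_derive t 1 g (dg t)) ->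
  g t @[t --> +oo] --> l -> dg t @[t --> +oo] --> L -> L <= 0.
Proof.
move=> gdg gl dgL; rewrite leNgt; apply/negP => L0.
have L20 : 0 < L / 2 by rewrite divr_gt0.
move/cvgrPdist_lt: dgL => /(_ _ L20) /near_pinftyP [M1 HM1].
move/cvgrPdist_lt: gl => /(_ _ ltr01) /near_pinftyP [M2 HM2].
set T := Num.max (Num.max M1 M2) 0 + 1.
have T0 : 0 < T by rewrite ltr_pwDr // le_max lexx orbT.
have M1T : M1 < T by rewrite ltr_pwDr // !le_max lexx.
have M2T : M2 < T by rewrite ltr_pwDr // !le_max lexx orbT.
set t := T + (`|g T| + `|l| + 2) / (L / 2).
have Tt : T <= t by rewrite lerDl divr_ge0 // ltW.
have growth : g T - L / 2 * T <= g t - L / 2 * t.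
  apply: (@ger0_is_derive_le (fun x => g x - L / 2 * x) (fun x => dg x - L / 2))
    => // [x x0|x Tx _].
  - have := is_deriveB (gdg x x0) (is_deriveZ (L / 2) (is_derive_id x 1)).
    by rewrite /GRing.scale /= mulr1.
  - have := HM1 x (lt_le_trans M1T Tx); rewrite ltr_distlC => /andP[+ _]; lra.
have := HM2 t (lt_le_trans M2T Tt); rewrite ltr_distlC => /andP[_ near_l].
have dist_Tt : `|g T| + `|l| + 2 = L / 2 * (t - T).
  by rewrite /t; field; rewrite gt_eqF.
have := ler_norm l; have := ler_norm (- g T); rewrite normrN.
move: growth dist_Tt near_l; lra.
Qed.

Lemma is_derive_cvg_pinfty_eq0 (g dg : R -> R) (l L : R) :
  (forall t : R, 0 < t -> is_derive t 1 g (dg t)) ->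
  g t @[t --> +oo] --> l -> dg t @[t --> +oo] --> L -> L = 0.
Proof.
move=> gdg gl dgL; apply/eqP; rewrite eq_le (is_derive_cvg_pinfty_le0 _ _ _ _ gdg gl dgL).
rewrite -oppr_le0; apply: (@is_derive_cvg_pinfty_le0 (fun t => - g t) (fun t => - dg t) (- l)).
- by move=> t t0; apply: is_deriveN; exact: gdg.
- exact: cvgN.
- exact: cvgN.
Qed.

Lemma is_derive_sumr (I : finType) (h : I -> R -> R) (dh : I -> R) (t : R) :
  (forall i, is_derive t 1 (h i) (dh i)) ->
  is_derive t 1 (fun x => \sum_i h i x) (\sum_i dh i).
Proof.
move=> hdh; have -> : (fun x => \sum_i h i x) = \sum_i h i.
  by apply/funext => x; rewrite fct_sumE.
elim/big_ind2 : _ => // [|f df g dg fdf gdg]; first exact: is_derive_cst.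
exact: is_deriveD.
Qed.

Lemma is_derive_expRM (B t : R) :
  is_derive t 1 (fun x => expR (B * x)) (expR (B * t) * B).
Proof.
have dlin : is_derive t 1 ( *%R B) B.
  by have := is_deriveZ B (is_derive_id t 1); rewrite /GRing.scale /= mulr1.
exact: (is_derive1_comp (f := expR) (g := *%R B)).
Qed.

Section Filter.
Context {T : Type} (F : set_system T) {FF : Filter F}.

Lemma cvg_sumr (I : finType) (f : I -> T -> R) (a : I -> R) :
  (forall i, f i x @[x --> F] --> a i) ->
  \sum_i f i x @[x --> F] --> \sum_i a i.
Proof.
by move=> fa; apply: (@cvg_big _ _ +%R 0 xpredT add_continuous) => // i _; exact: fa.
Qed.

Lemma cvg_dist_le_cvg0 (f b : T -> R) (a : R) :
  (\forall x \near F, `|a - f x| <= b x) -> b x @[x --> F] --> 0 ->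
  f x @[x --> F] --> a.
Proof.
move=> fb b0; apply/cvgrPdist_le => e e0.
move/cvgrPdist_le: b0 => /(_ e e0).
apply: filterS2 fb => x fbx; rewrite sub0r normrN => bxe.
exact: le_trans fbx (le_trans (ler_norm _) bxe).
Qed.

End Filter.
End RealAnalysis.

Section Growth.
Context {R : realType}.
Variables (P G : R -> R) (B : R).
Hypothesis P'_PG : forall t : R, 0 < t -> is_derive t 1 P (P t * G t).
Hypothesis P_ge0 : forall t : R, 0 < t -> 0 <= P t.
Hypothesis G_ge : forall t : R, 0 < t -> - B <= G t.

(* [P t * expR (B * t)] is nondecreasing. *)
Lemma is_derive_mul_gt0 {t1 : R} : 0 < t1 -> 0 < P t1 ->
  forall t, t1 <= t -> 0 < P t.
Proof.
move=> t1_gt0 Pt1 t t1t.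
pose E x := expR (B * x).
have PE_ndecr : (P * E) t1 <= (P * E) t.
  apply: (@ger0_is_derive_le _ _ (fun x => E x * (P x * (B + G x)))) => // [x x0|x t1x _].
  - have -> : E x * (P x * (B + G x)) =
        P x *: (expR (B * x) * B) + E x *: (P x * G x).
      by rewrite /GRing.scale /E /=; ring.
    exact: is_deriveM (P'_PG x x0) (is_derive_expRM B x).
  - have x0 := lt_le_trans t1_gt0 t1x.
    rewrite mulr_ge0 ?expR_ge0 ?mulr_ge0 ?P_ge0 //.
    by have := G_ge x x0; lra.
have := lt_le_trans (mulr_gt0 Pt1 (expR_gt0 (B * t1))) PE_ndecr.
by rewrite /= pmulr_lgt0 ?expR_gt0.
Qed.

Lemma is_derive_mul_cvg_gt0 (t1 g p : R) : 0 < t1 -> 0 < P t1 ->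
  G t @[t --> +oo] --> g -> 0 < g -> P t @[t --> +oo] --> p -> 0 < p.
Proof.
move=> t1_gt0 Pt1 Gg g_gt0 Pp.
move/cvgrPdist_lt: Gg => /(_ _ g_gt0) /near_pinftyP [M HM].
set T := Num.max (Num.max M t1) 0 + 1.
have MT : M < T by rewrite ltr_pwDr // !le_max lexx.
have t1T : t1 <= T by apply: ltW; rewrite ltr_pwDr // !le_max lexx orbT.
have T_gt0 := lt_le_trans t1_gt0 t1T.
have PT := is_derive_mul_gt0 t1_gt0 Pt1 _ t1T.
suff P_ndecr : forall t, T <= t -> P T <= P t.
  apply: lt_le_trans PT _; apply: (cvgr_to_ge Pp).
  by apply: (@near_pinfty_gt _ _ T) => t /ltW; exact: P_ndecr.
move=> t Tt; apply: (@ger0_is_derive_le _ P (fun x => P x * G x) _ _ T_gt0 Tt P'_PG) => x Tx _.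
rewrite mulr_ge0 ?P_ge0 //; first exact: lt_le_trans Tx.
by have := HM x (lt_le_trans MT Tx); rewrite ltr_distlC => /andP[+ _]; lra.
Qed.

End Growth.

Section FiniteVectors.
Context {R : realType}.

Lemma cvg_coord {T : Type} (F : set_system T) {FF : Filter F} n
    (f : T -> 'rV[R]_n) (l : 'rV[R]_n) (i : 'I_n) :
  f x @[x --> F] --> l -> f x ord0 i @[x --> F] --> l ord0 i.
Proof. exact: (continuous_cvg _ (@coord_continuous R 1 n ord0 i l)). Qed.

Lemma is_derive_coord n (f : R -> 'rV[R]_n) (t : R) (D : 'rV[R]_n) (i : 'I_n) :
  is_derive t 1 f D -> is_derive t 1 (fun x => f x ord0 i) (D ord0 i).
Proof.
move=> [fdv <-]; have := (derivable_mxP f t 1).1 fdv ord0 i.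
by rewrite (derive_mx fdv) mxE; exact: derivableP.
Qed.

Lemma supn_ge0 (T : finType) (x : T -> R) : 0 <= supn x.
Proof.
by rewrite /supn; elim/big_rec : _ => // i y _ y0; rewrite le_max y0 orbT.
Qed.

Lemma supn_le (T : finType) (x : T -> R) (b : R) :
  0 <= b -> (forall i, `|x i| <= b) -> supn x <= b.
Proof.
by move=> b0 xb; rewrite /supn; elim/big_rec : _ => // i y _ yb; rewrite ge_max xb.
Qed.

Lemma supn_le_sumr (T : finType) (x : T -> R) : supn x <= \sum_i `|x i|.
Proof.
apply: supn_le => [|i]; first exact: sumr_ge0.
by rewrite (bigD1 i) //= lerDl sumr_ge0.
Qed.

Lemma cvg_supn_subr {S : Type} (F : set_system S) {FF : Filter F} (T : finType)
    (g : T -> S -> R) (a : T -> R) :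
  (forall w, g w t @[t --> F] --> a w) ->
  supn (fun w => a w - g w t) @[t --> F] --> 0.
Proof.
move=> ga; have sum0 : \sum_w `|a w - g w t| @[t --> F] --> \sum_(w : T) (0 : R).
  apply: cvg_sumr => w; rewrite -(@normr0 _ R) -(subrr (a w)).
  by apply: cvg_norm; apply: cvgB => //; exact: cvg_cst.
rewrite big1 // in sum0; apply: cvg_dist_le_cvg0 sum0; apply: nearW => t.
by rewrite sub0r normrN ger0_norm ?supn_ge0 ?supn_le_sumr.
Qed.

Lemma lipschitz2_cvg {S : Type} (F : set_system S) {FF : Filter F} (T : finType)
    (g : (T -> R) -> (T -> R) -> T -> T -> R) (pi x : S -> T -> R) (pil xl : T -> R) u v :
  lipschitz2 g -> nonnegv xl -> (\forall t \near F, nonnegv (x t)) ->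
  (forall w, pi t w @[t --> F] --> pil w) -> (forall w, x t w @[t --> F] --> xl w) ->
  g (pi t) (x t) u v @[t --> F] --> g pil xl u v.
Proof.
move=> [L gL] xl_ge0 x_ge0 pi_cvg x_cvg.
apply: (@cvg_dist_le_cvg0 _ _ _ _ _
  (fun t => L * (supn (fun w => pil w - pi t w) + supn (fun w => xl w - x t w)))).
  by apply: filterS x_ge0 => t xt_ge0; exact: gL.
rewrite -(mulr0 L) -(addr0 0); apply: cvgMl_tmp; apply: cvgD; exact: cvg_supn_subr.
Qed.

Lemma lipschitz1_cvg {S : Type} (F : set_system S) {FF : Filter F}
    (g : R -> R) (f : S -> R) (a : R) :
  lipschitz1 g -> f t @[t --> F] --> a -> g (f t) @[t --> F] --> g a.
Proof.
move=> [L gL] fa; apply: (@cvg_dist_le_cvg0 _ _ _ _ _ (fun t => L * `|a - f t|)).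
  by apply: nearW => t; exact: gL.
rewrite -(mulr0 L) -(@normr0 _ R) -(subrr a); apply: cvgMl_tmp; apply: cvg_norm.
by apply: cvgB => //; exact: cvg_cst.
Qed.

End FiniteVectors.

Section RevisionBalance.
Context {R : realType} {T : finType}.
Implicit Types (x pi p : T -> R) (r : T -> T -> R).

Definition net_inflow x r (u : T) : R :=
  \sum_u' x u' * r u' u - x u * \sum_u' r u u'.

Lemma net_inflow_eq0 x r u :
  (forall u' v, u' != v -> x u' * r u' v = 0) -> net_inflow x r u = 0.
Proof.
move=> no_switch; rewrite /net_inflow (bigD1 u) //= big1; last by move=> u' /no_switch.
rewrite [\sum_u' r u u'](bigD1 u) //= mulrDr mulr_sumr big1 ?addr0 ?subrr //.
by move=> u' u'u; apply: no_switch; rewrite eq_sym.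
Qed.

(* The worst paid used policy [w] receives no mass (every used policy pays at least as
   much), so at rest it loses none either: nothing pays more than [w]. *)
Lemma pairwise_rest_nash x pi r :
  (forall u, 0 <= x u) -> (forall u v, 0 <= r u v) ->
  (forall u v, 0 < r u v <-> pi u < pi v) -> (forall u, net_inflow x r u = 0) ->
  forall u, 0 < x u -> forall v, pi v <= pi u.
Proof.
move=> x_ge0 r_ge0 r_gt0 rest u xu v; rewrite leNgt; apply/negP => puv.
have [w xw w_min] := @arg_minP _ _ _ u (fun i => 0 < x i) pi xu.
have in_w : \sum_u' x u' * r u' w = 0.
  apply: big1 => u' _; have [xu'|xu'_le0] := ltP 0 (x u').
    suff -> : r u' w = 0 by rewrite mulr0.
    apply: le_anti; rewrite r_ge0 andbT leNgt.
    by apply/negP => /r_gt0; rewrite ltNge w_min.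
  have -> : x u' = 0 by apply: le_anti; rewrite xu'_le0 x_ge0.
  by rewrite mul0r.
have := rest w; rewrite /net_inflow in_w sub0r => /eqP.
rewrite oppr_eq0 mulf_eq0 (gt_eqF xw) /= => /eqP out_w.
have := @psumr_eq0P _ _ _ _ (fun v _ => r_ge0 w v) out_w v isT.
by move/eqP; rewrite (gt_eqF (proj2 (r_gt0 w v) (le_lt_trans (w_min u xu) puv))).
Qed.

Definition excess (mc : R) x pi (w : T) : R := pi w - (\sum_w' x w' * pi w') / mc.

Definition acute (tau : (T -> R) -> T -> R) : Prop :=
  forall p, (exists v, 0 < p v) -> 0 < \sum_v tau p v * p v.

(* At rest [mc * tau_u = x_u * sum tau]; as the excess payoffs have zero [x]-mean, this
   gives [sum_v tau_v * p_v = 0], which acuteness forbids if some [p_v > 0]. *)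
Lemma excess_rest_nash x pi (mc : R) (tau : (T -> R) -> T -> R) :
  0 < mc -> (forall u, 0 <= x u) -> \sum_u x u = mc -> acute tau ->
  (forall u, net_inflow x (fun _ => tau (excess mc x pi)) u = 0) ->
  (forall v, excess mc x pi v <= 0) /\ (forall u, 0 < x u -> excess mc x pi u = 0).
Proof.
move=> mc_gt0 x_ge0 sum_x tau_acute rest; set p := excess mc x pi.
have tau_prop u : mc * tau p u = x u * \sum_v tau p v.
  by have /eqP := rest u; rewrite /net_inflow -mulr_suml sum_x subr_eq0 => /eqP.
have mean_p : \sum_u x u * p u = 0.
  rewrite /p /excess; under eq_bigr do rewrite mulrBr.
  by rewrite sumrB -mulr_suml sum_x mulrC divfK ?subrr ?gt_eqF.
have p_le0 v : p v <= 0.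
  rewrite leNgt; apply/negP => pv.
  have := mulr_gt0 mc_gt0 (tau_acute p (ex_intro _ v pv)).
  rewrite mulr_sumr; under eq_bigr do rewrite mulrA tau_prop mulrAC.
  by rewrite -mulr_suml mean_p mul0r ltxx.
split=> // u xu.
have xp_eq0 := psumr_eq0P (P := xpredT) (F := fun u => - (x u * p u)).
have /eqP : - (x u * p u) = 0.
  apply: xp_eq0 => // [w _|]; first by rewrite oppr_ge0 mulr_ge0_le0.
  by rewrite sumrN mean_p oppr0.
by rewrite oppr_eq0 mulf_eq0 (gt_eqF xu) => /eqP.
Qed.

Lemma sumr_mul_delta (f : T -> R) (u : T) (d : R) :
  \sum_w f w * (if w == u then d else 0) = f u * d.
Proof. by rewrite (bigD1 u) //= eqxx big1 ?addr0 // => w /negPf ->; rewrite mulr0. Qed.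

Definition bump p (u1 u2 : T) (d k : R) (w : T) : R :=
  p w + (if w == u1 then d else 0) - (if w == u2 then k * d else 0).

Lemma supn_sub_bump p u1 u2 d k : u1 != u2 -> 0 <= d -> 1 <= k ->
  supn (fun w => p w - bump p u1 u2 d k w) <= k * d.
Proof.
move=> u12 d0 k1; have kd0 : 0 <= k * d by rewrite mulr_ge0 //; lra.
apply: supn_le => // w; rewrite /bump.
have [->|wu1] := eqVneq w u1.
  by rewrite (negPf u12) subr0 opprD addNKr normrN ger0_norm // ler_peMl.
rewrite addr0; case: eqP => _; last by rewrite subr0 subrr normr0.
by rewrite opprB addrC subrK ger0_norm.
Qed.

(* The bump is positive at [u1], so acuteness applies to it, while [p <= 0] elsewhere. *)
Lemma acute_bump (tau : (T -> R) -> T -> R) p u1 u2 d k :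
  acute tau -> (forall q v, 0 <= tau q v) -> (forall v, p v <= 0) -> p u1 = 0 ->
  u2 != u1 -> 0 < d ->
  k * tau (bump p u1 u2 d k) u2 < tau (bump p u1 u2 d k) u1.
Proof.
move=> tau_acute tau_ge0 p_le0 pu1 u21 d0; set q := bump p u1 u2 d k.
have q_pos : 0 < \sum_v tau q v * q v.
  by apply: tau_acute; exists u1; rewrite /q /bump eqxx eq_sym (negPf u21) pu1; lra.
have expand : \sum_v tau q v * q v =
    \sum_v tau q v * p v + tau q u1 * d - tau q u2 * (k * d).
  rewrite {1}/q /bump; under eq_bigr do rewrite mulrBr mulrDr.
  by rewrite sumrB big_split /= !sumr_mul_delta.
have tau_p_le0 : \sum_v tau q v * p v <= 0 by apply: sumr_le0 => v _; exact: mulr_ge0_le0.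
have : 0 < d * (tau q u1 - k * tau q u2).
  by move: q_pos tau_p_le0; rewrite expand; lra.
by rewrite pmulr_rgt0 // subr_gt0.
Qed.

(* If [b := tau p u2 > 0], take [k * b = tau p u1 + 1 + b]: for [d] small the Lipschitz
   bound keeps the rates at the bump close to those at [p], contradicting [acute_bump]. *)
Lemma excess_tau_eq0 (tau : (T -> R) -> T -> R) p u1 u2 :
  lipschitzV tau -> (forall q v, 0 <= tau q v) -> acute tau ->
  (forall v, p v <= 0) -> p u1 = 0 -> u2 != u1 -> tau p u2 = 0.
Proof.
move=> [L tau_lip] tau_ge0 tau_acute p_le0 pu1 u21.
set a := tau p u1; set b := tau p u2.
have [b_gt0|] := ltP 0 b; last by move=> b_le0; apply: le_anti; rewrite b_le0 tau_ge0.
exfalso.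
have a0 : 0 <= a by exact: tau_ge0.
set L' := `|L|; have L'0 : 0 <= L' := normr_ge0 L.
set k := (a + 1) / b + 1.
have k1 : 1 <= k by rewrite lerDr divr_ge0 // ?addr_ge0 // ltW.
have kb : k * b = a + 1 + b by rewrite /k mulrDl mul1r divfK // gt_eqF.
set d := 1 / (L' * k * (k + 1) + 1).
have Q0 : 0 <= L' * k * (k + 1) by rewrite !mulr_ge0 //; lra.
have d0 : 0 < d by rewrite divr_gt0 //; lra.
have Qd : L' * k * (k + 1) * d < 1 by rewrite /d mul1r ltr_pdivrMr; lra.
set q := bump p u1 u2 d k.
have tau_close u : `|tau p u - tau q u| <= L' * (k * d).
  apply: le_trans (tau_lip p q u) _; apply: le_trans (ler_norm _) _.
  rewrite normrM (ger0_norm (supn_ge0 _ _)); apply: ler_wpM2l => //.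
  by apply: supn_sub_bump => //; [rewrite eq_sym | exact: ltW].
have := acute_bump _ _ _ _ d k tau_acute tau_ge0 p_le0 pu1 u21 d0; rewrite -/q => q_ineq.
have := tau_close u1; have := tau_close u2; rewrite !ler_norml -/a -/b.
move=> /andP[_ close2] /andP[close1 _].
have kq2 : k * b - k * (L' * (k * d)) <= k * tau q u2.
  by rewrite -mulrBr ler_wpM2l //; lra.
have : L' * k * (k + 1) * d = L' * (k * d) + k * (L' * (k * d)) by ring.
lra.
Qed.

Definition imit_growth (mc : R) (vphi : R -> R) x pi (v : T) : R :=
  (\sum_u' x u' * (vphi (pi v - pi u') - vphi (pi u' - pi v))) / mc.

Lemma net_inflow_imitative (mc : R) (vphi : R -> R) x pi v :
  net_inflow x (fun u' u => x u / mc * vphi (pi u - pi u')) v =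
  x v * imit_growth mc vphi x pi v.
Proof.
rewrite /net_inflow /imit_growth mulr_sumr -sumrB mulrA mulr_sumr mulr_suml.
by apply: eq_bigr => u' _; ring.
Qed.

Lemma imit_growth_ge (mc B : R) (vphi : R -> R) x pi v :
  0 < mc -> (forall u, 0 <= x u) -> \sum_u x u = mc ->
  (forall d, 0 <= vphi d) -> (forall u, vphi (pi u - pi v) <= B) ->
  - B <= imit_growth mc vphi x pi v.
Proof.
move=> mc_gt0 x_ge0 sum_x vphi_ge0 vphiB; rewrite /imit_growth ler_pdivlMr //.
rewrite -sum_x mulr_sumr; apply: ler_sum => u _; rewrite mulrC ler_wpM2l //.
by have := vphi_ge0 (pi v - pi u); have := vphiB u; lra.
Qed.

Lemma imit_growth_gt0 (mc : R) (vphi : R -> R) x pi v u :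
  0 < mc -> (forall u, 0 <= x u) ->
  (forall d, d <= 0 -> vphi d = 0) -> (forall d, 0 < d -> 0 < vphi d) ->
  (forall w, pi w <= pi v) -> 0 < x u -> pi u < pi v ->
  0 < imit_growth mc vphi x pi v.
Proof.
move=> mc_gt0 x_ge0 vphi0 vphi_gt0 v_max xu puv; rewrite /imit_growth divr_gt0 //.
have vphi_ge0 d : 0 <= vphi d by have [/vphi0 ->|/vphi_gt0/ltW] := lerP d 0.
have term_ge0 w : 0 <= x w * (vphi (pi v - pi w) - vphi (pi w - pi v)).
  by rewrite (vphi0 (pi w - pi v)) ?subr0 ?mulr_ge0 // subr_le0.
rewrite (bigD1 u) //= ltr_pwDl ?sumr_ge0 //.
by rewrite (vphi0 (pi u - pi v)) ?subr0 ?mulr_gt0 ?vphi_gt0 ?subr_gt0 // subr_le0 ltW.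
Qed.

End RevisionBalance.

(* Comparing [rho] at the point masses on [v] and on [u] isolates [vphi (pi v - pi u)],
   so the Lipschitz bound in the distribution argument caps [vphi]. *)
Lemma imitative_rate_bounded {R : realType} (T : finType) (mc : R)
    (rho : (T -> R) -> (T -> R) -> T -> T -> R) (vphi : R -> R) :
  0 < mc -> lipschitz2 rho ->
  (forall pi x, simplexv mc x -> forall u v, rho pi x u v = x v / mc * vphi (pi v - pi u)) ->
  (forall d, d <= 0 -> vphi d = 0) ->
  exists B, forall (pi : T -> R) u v, vphi (pi v - pi u) <= B.
Proof.
move=> mc_gt0 [L rho_lip] rhoE vphi0; exists (`|L| * mc) => pi u v.
have [->|vu] := eqVneq v u; first by rewrite subrr vphi0 // mulr_ge0 // ltW.
pose e (z w : T) : R := if w == z then mc else 0.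
have e_simplex (z : T) : simplexv mc (e z).
  split=> [w|]; first by rewrite /e; case: eqP => // _; exact: ltW.
  by rewrite (bigD1 z) //= /e eqxx big1 ?addr0 // => w /negPf ->.
have := rho_lip pi pi (e v) (e u) (e_simplex v).1 (e_simplex u).1 u v.
rewrite !rhoE // /e eqxx (negPf vu) !mul0r subr0 divff ?gt_eqF // mul1r => lip.
apply: le_trans (ler_norm _) (le_trans lip _); apply: le_trans (ler_norm _) _.
rewrite normrM ler_wpM2l // ger0_norm ?addr_ge0 ?supn_ge0 //.
have -> : supn (fun w => pi w - pi w) = 0.
  by apply: le_anti; rewrite supn_ge0 supn_le // => w; rewrite subrr normr0.
rewrite add0r; apply: supn_le => [|w]; first exact: ltW.
have [->|wv] := eqVneq w v; first by rewrite (negPf vu) subr0 gtr0_norm.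
by rewrite sub0r normrN; case: eqP => _; rewrite ?normr0 ?gtr0_norm // ltW.
Qed.

Lemma cvg_imit_growth {R : realType} {S : Type} (F : set_system S) {FF : Filter F}
    (T : finType) (mc : R) (vphi : R -> R) (x pi : S -> T -> R) (xl pil : T -> R) v :
  lipschitz1 vphi -> (forall w, x t w @[t --> F] --> xl w) ->
  (forall w, pi t w @[t --> F] --> pil w) ->
  imit_growth mc vphi (x t) (pi t) v @[t --> F] --> imit_growth mc vphi xl pil v.
Proof.
move=> vphi_lip x_cvg pi_cvg; apply: cvgMr_tmp; apply: cvg_sumr => w.
apply: cvgM => //; apply: cvgB; apply: lipschitz1_cvg => //; exact: cvgB.
Qed.

Section Model.
Context {R : realType} {C : finType} {S U : C -> finType}
  {A : forall c, S c -> finType}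
  (pol : forall c, U c -> forall s : S c, A c s)
  (phi : forall c (s' : S c), A c s' -> S c -> R)
  (m Rd : C -> R)
  (F : forall c, pstate R S U -> U c -> R)
  (rho : forall c, (U c -> R) -> (U c -> R) -> U c -> U c -> R).

Definition coord_idx {c} (s : S c) (u : U c) : 'I_#|idx S U| :=
  enum_rank (@Tagged C c (fun c => (S c * U c)%type) (s, u)).

Lemma vfieldE (y : pstate R S U) c (s : S c) (u : U c) :
  vfield pol phi Rd F rho y ord0 (coord_idx s u) =
  f_d pol phi Rd y c s u + f_r F rho y c s u.
Proof. by rewrite mxE /coord_idx enum_rankK. Qed.

Lemma sum_upol c (u : U c) (s : S c) : \sum_(a : A c s) upol pol c u s a = 1 :> R.
Proof.
by rewrite (bigD1 (pol c u s)) //= /upol eqxx big1 ?addr0 // => a /negPf ->.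
Qed.

Hypothesis phi_stoch : forall c (s' : S c) (a : A c s'), \sum_(s : S c) phi c s' a s = 1.

Lemma sum_f_d (y : pstate R S U) c (u : U c) :
  \sum_(s : S c) f_d pol phi Rd y c s u = 0.
Proof.
rewrite /f_d sumrB -!mulr_sumr; apply/eqP; rewrite subr_eq0; apply/eqP; congr (_ * _).
rewrite exchange_big /=; apply: eq_bigr => s' _; rewrite exchange_big /=.
under eq_bigr do rewrite -mulr_suml -mulr_suml phi_stoch mul1r.
by rewrite -mulr_suml sum_upol mul1r.
Qed.

Lemma sum_f_r (y : pstate R S U) c (u : U c) :
  \sum_(s : S c) f_r F rho y c s u = net_inflow (pmass y c) (rho c (F c y) (pmass y c)) u.
Proof.
rewrite /f_r /net_inflow sumrB /pmass -mulr_suml; congr (_ - _).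
by rewrite exchange_big /=; apply: eq_bigr => u' _; rewrite mulr_suml.
Qed.

Definition nash_no_switch (x : pstate R S U) c : Prop :=
  (forall u, 0 < pmass x c u -> forall v, F c x v <= F c x u) /\
  (forall (s : S c) u' u, u' != u -> mu_at x c s u' * rho c (F c x) (pmass x c) u' u = 0).

End Model.

Section Trajectory.
Context {R : realType} {C : finType} {S U : C -> finType}
  {A : forall c, S c -> finType}
  {pol : forall c, U c -> forall s : S c, A c s}
  {phi : forall c (s' : S c), A c s' -> S c -> R}
  {m Rd : C -> R}
  {F : forall c, pstate R S U -> U c -> R}
  {rho : forall c, (U c -> R) -> (U c -> R) -> U c -> U c -> R}
  {mu : R -> pstate R S U} {mustar : pstate R S U}.
Hypothesis F_C1 : C1_near_X m F.
Hypothesis rho_rev : forall c, revision_protocol (rho c).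
Hypothesis mu_X : forall t : R, 0 <= t -> in_X m (mu t).
Hypothesis mu_lim : mu t @[t --> +oo] --> mustar.

Lemma cvg_mu_at c (s : S c) (u : U c) :
  mu_at (mu t) c s u @[t --> +oo] --> mu_at mustar c s u.
Proof. exact: cvg_coord. Qed.

Lemma cvg_pmass c (u : U c) : pmass (mu t) c u @[t --> +oo] --> pmass mustar c u.
Proof. by apply: cvg_sumr => s; exact: cvg_mu_at. Qed.

Lemma near_pinfty_in_X : \forall t \near +oo, in_X m (mu t).
Proof. by apply: (@near_pinfty_gt _ _ 0) => t /ltW; exact: mu_X. Qed.

Lemma in_X_lim : in_X m mustar.
Proof.
split=> [c s u|c].
  apply: (cvgr_to_ge (cvg_mu_at _ s u)).
  by apply: filterS near_pinfty_in_X => t [mu_ge0 _]; exact: mu_ge0.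
have mass_cvg : \sum_(s : S c) \sum_(u : U c) mu_at (mu t) c s u @[t --> +oo] -->
    \sum_(s : S c) \sum_(u : U c) mu_at mustar c s u.
  by apply: cvg_sumr => s; apply: cvg_sumr => u; exact: cvg_mu_at.
have mass_eq : \forall t \near +oo, \sum_(s : S c) \sum_(u : U c) mu_at (mu t) c s u = m c.
  by apply: filterS near_pinfty_in_X => t [_ ->].
apply: le_anti; rewrite (cvgr_to_le mass_cvg) ?(cvgr_to_ge mass_cvg) //;
  by apply: filterS mass_eq => t ->.
Qed.

Lemma cvg_F c (u : U c) : F c (mu t) u @[t --> +oo] --> F c mustar u.
Proof.
have [nbhdX [_ [X_nbhdX F_diff]]] := F_C1.
have F_cont := differentiable_continuous ((F_diff c u).1 _ (X_nbhdX _ in_X_lim)).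
exact: continuous_cvg F_cont mu_lim.
Qed.

Lemma cvg_rho c (u v : U c) :
  rho c (F c (mu t)) (pmass (mu t) c) u v @[t --> +oo] -->
  rho c (F c mustar) (pmass mustar c) u v.
Proof.
apply: lipschitz2_cvg (rho_rev c).1 _ _ (cvg_F c) (cvg_pmass c).
  by move=> w; apply: sumr_ge0 => s _; exact: in_X_lim.1.
by apply: filterS near_pinfty_in_X => t [mu_ge0 _] w; apply: sumr_ge0 => s _.
Qed.

Lemma cvg_f_d c (s : S c) (u : U c) :
  f_d pol phi Rd (mu t) c s u @[t --> +oo] --> f_d pol phi Rd mustar c s u.
Proof.
apply: cvgB; apply: cvgMl_tmp; last exact: cvg_mu_at.
by apply: cvg_sumr => s'; apply: cvg_sumr => a; apply: cvgMl_tmp; exact: cvg_mu_at.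
Qed.

Lemma cvg_f_r c (s : S c) (u : U c) :
  f_r F rho (mu t) c s u @[t --> +oo] --> f_r F rho mustar c s u.
Proof.
apply: cvgB; last by apply: cvgM; [exact: cvg_mu_at | apply: cvg_sumr => u'; exact: cvg_rho].
by apply: cvg_sumr => u'; apply: cvgM; [exact: cvg_mu_at | exact: cvg_rho].
Qed.

Hypothesis mu_sol :
  forall t : R, 0 < t -> is_derive t 1 mu (vfield pol phi Rd F rho (mu t)).

Lemma rest_point_lim c (s : S c) (u : U c) :
  f_d pol phi Rd mustar c s u + f_r F rho mustar c s u = 0.
Proof.
apply: (@is_derive_cvg_pinfty_eq0 _ (fun t => mu_at (mu t) c s u)
  (fun t => vfield pol phi Rd F rho (mu t) ord0 (coord_idx s u)) (mu_at mustar c s u)).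
- by move=> t t0; apply: is_derive_coord; exact: mu_sol.
- exact: cvg_mu_at.
- by under eq_cvg do rewrite vfieldE; apply: cvgD; [exact: cvg_f_d | exact: cvg_f_r].
Qed.

End Trajectory.

Section RestPoint.
Context {R : realType} {C : finType} {S U : C -> finType}
  {A : forall c, S c -> finType}
  {pol : forall c, U c -> forall s : S c, A c s}
  {phi : forall c (s' : S c), A c s' -> S c -> R}
  {m Rd : C -> R}
  {F : forall c, pstate R S U -> U c -> R}
  {rho : forall c, (U c -> R) -> (U c -> R) -> U c -> U c -> R}
  {x : pstate R S U}.
Hypothesis x_X : in_X m x.

Lemma pmass_ge0 c (u : U c) : 0 <= pmass x c u.
Proof. by apply: sumr_ge0 => s _; exact: x_X.1. Qed.

Lemma sum_pmass c : \sum_(u : U c) pmass x c u = m c.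
Proof. by rewrite /pmass exchange_big; exact: x_X.2. Qed.

Lemma pmass_simplex c : simplexv (m c) (pmass x c).
Proof. by split; [exact: pmass_ge0 | exact: sum_pmass]. Qed.

Lemma mu_at_eq0 c (s : S c) (u : U c) : pmass x c u <= 0 -> mu_at x c s u = 0.
Proof.
move=> pm_le0; have pm0 : pmass x c u = 0 by apply: le_anti; rewrite pm_le0 pmass_ge0.
by apply: (psumr_eq0P _ pm0) => // s' _; exact: x_X.1.
Qed.

Hypothesis phi_stoch : forall c (s' : S c) (a : A c s'), \sum_(s : S c) phi c s' a s = 1.
Hypothesis x_rest : forall c (s : S c) (u : U c),
  f_d pol phi Rd x c s u + f_r F rho x c s u = 0.

Lemma pmass_rest c (u : U c) : net_inflow (pmass x c) (rho c (F c x) (pmass x c)) u = 0.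
Proof.
have : \sum_(s : S c) (f_d pol phi Rd x c s u + f_r F rho x c s u) = 0.
  by apply: big1 => s _; exact: x_rest.
by rewrite big_split /= sum_f_d // add0r sum_f_r.
Qed.

(* Without switching [f_r] vanishes, hence so does [f_d] by the rest equation. *)
Lemma MSNE_of_nash_no_switch : (forall c, nash_no_switch F rho x c) -> MSNE pol phi m Rd F x.
Proof.
move=> nash; split=> // c; have [best no_switch] := nash c; split=> // s u.
have f_r0 : f_r F rho x c s u = 0 by apply: net_inflow_eq0; exact: no_switch.
by have := x_rest c s u; rewrite f_r0 addr0.
Qed.

Lemma pairwise_nash_no_switch c :
  revision_protocol (rho c) -> pairwise_comparison (rho c) -> nash_no_switch F rho x c.
Proof.
move=> [_ rho_ge0] [r [_ r_gt0 rhoE]].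
have rE : rho c (F c x) (pmass x c) = r (F c x).
  by apply/funext => u; apply/funext => v; apply: rhoE; exact: pmass_ge0.
have r_ge0 u v : 0 <= r (F c x) u v by rewrite -rE rho_ge0 //; exact: pmass_ge0.
have best : forall u, 0 < pmass x c u -> forall v, F c x v <= F c x u.
  apply: (pairwise_rest_nash _ _ _ (pmass_ge0 c) r_ge0 (r_gt0 _)) => u.
  by rewrite -rE; exact: pmass_rest.
split=> // s u' u _; have [xu'|xu'_le0] := ltP 0 (pmass x c u'); last first.
  by rewrite mu_at_eq0 // mul0r.
suff -> : rho c (F c x) (pmass x c) u' u = 0 by rewrite mulr0.
apply: le_anti; rewrite rE r_ge0 andbT leNgt.
by apply/negP => /r_gt0; rewrite ltNge best.
Qed.

Lemma excess_nash_no_switch c : 0 < m c -> excess_payoff (m c) (rho c) -> nash_no_switch F rho x c.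
Proof.
move=> m_gt0 [tau [tau_lip tau_ge0 tau_acute rhoE]].
set p := excess (m c) (pmass x c) (F c x).
have rE : rho c (F c x) (pmass x c) = fun _ => tau p.
  by apply/funext => u; apply/funext => v; apply: rhoE; exact: pmass_simplex.
have [p_le0 p_eq0] : (forall v, p v <= 0) /\ (forall u, 0 < pmass x c u -> p u = 0).
  apply: excess_rest_nash (pmass_ge0 c) (sum_pmass c) tau_acute _ => // u.
  by rewrite -rE; exact: pmass_rest.
split=> [u xu v|s u' u u'u].
  by have := p_le0 v; have := p_eq0 u xu; rewrite /p /excess; lra.
have [xu'|xu'_le0] := ltP 0 (pmass x c u'); last by rewrite mu_at_eq0 // mul0r.
rewrite rE (excess_tau_eq0 _ _ _ _ tau_lip tau_ge0 tau_acute p_le0 (p_eq0 _ xu')) ?mulr0 //.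
by rewrite eq_sym.
Qed.

End RestPoint.

Section Imitative.
Context {R : realType} {C : finType} {S U : C -> finType}
  {A : forall c, S c -> finType}
  {pol : forall c, U c -> forall s : S c, A c s}
  {phi : forall c (s' : S c), A c s' -> S c -> R}
  {m Rd : C -> R}
  {F : forall c, pstate R S U -> U c -> R}
  {rho : forall c, (U c -> R) -> (U c -> R) -> U c -> U c -> R}
  {c : C} {vphi : R -> R}.
Hypothesis phi_stoch : forall c (s' : S c) (a : A c s'), \sum_(s : S c) phi c s' a s = 1.
Hypothesis vphi_lip : lipschitz1 vphi.
Hypothesis vphi0 : forall d, d <= 0 -> vphi d = 0.
Hypothesis vphi_gt0 : forall d, 0 < d -> 0 < vphi d.
Hypothesis rho_imitE : forall pi x, simplexv (m c) x ->
  forall u v, rho c pi x u v = x v / m c * vphi (pi v - pi u).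

Lemma rho_imitativeE (y : pstate R S U) : in_X m y ->
  rho c (F c y) (pmass y c) = fun u v => pmass y c v / m c * vphi (F c y v - F c y u).
Proof.
move=> yX; apply/funext => u; apply/funext => v.
by rewrite rho_imitE //; exact: pmass_simplex.
Qed.

Lemma sum_vfield_imitative (y : pstate R S U) (v : U c) : in_X m y ->
  \sum_(s : S c) vfield pol phi Rd F rho y ord0 (coord_idx s v) =
  pmass y c v * imit_growth (m c) vphi (pmass y c) (F c y) v.
Proof.
move=> yX; under eq_bigr do rewrite vfieldE.
by rewrite big_split /= sum_f_d // add0r sum_f_r rho_imitativeE // net_inflow_imitative.
Qed.

Lemma pmass_gt0 (y : pstate R S U) (s0 : S c) (u : U c) :
  (forall s, 0 <= mu_at y c s u) -> 0 < mu_at y c s0 u -> 0 < pmass y c u.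
Proof.
move=> y_ge0 ys0; rewrite /pmass (bigD1 s0) //=.
by rewrite ltr_pwDl // sumr_ge0.
Qed.

Context {mu : R -> pstate R S U} {mustar : pstate R S U}.
Hypothesis m_gt0 : 0 < m c.
Hypothesis F_C1 : C1_near_X m F.
Hypothesis rho_rev : forall c, revision_protocol (rho c).
Hypothesis mu_X : forall t : R, 0 <= t -> in_X m (mu t).
Hypothesis mu0_interior : forall (s : S c) (u : U c), 0 < mu_at (mu 0) c s u.
Hypothesis mu_right0 : mu t @[t --> 0^'+] --> mu 0.
Hypothesis mu_sol :
  forall t : R, 0 < t -> is_derive t 1 mu (vfield pol phi Rd F rho (mu t)).
Hypothesis mu_lim : mu t @[t --> +oo] --> mustar.

Lemma is_derive_pmass_imitative (v : U c) (t : R) : 0 < t ->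
  is_derive t 1 (fun t => pmass (mu t) c v)
    (pmass (mu t) c v * imit_growth (m c) vphi (pmass (mu t) c) (F c (mu t)) v).
Proof.
move=> t_gt0; rewrite -sum_vfield_imitative; last exact/mu_X/ltW.
apply: is_derive_sumr => s; apply: is_derive_coord; exact: mu_sol.
Qed.

(* The marginal of [v] is positive near time [0] (interior start) and eventually grows,
   its growth rate tending to a positive limit, so its limit is positive. *)
Lemma imitative_best_reply (u v : U c) :
  0 < pmass mustar c u -> (forall w, F c mustar w <= F c mustar v) ->
  F c mustar u < F c mustar v -> 0 < pmass mustar c v.
Proof.
move=> xu v_max better.
have [s0 _] : exists s0 : S c, True.
  have [s0 _|S0] := pickP (fun _ : S c => true); first by exists s0.
  by move: xu; rewrite /pmass big_pred0 ?ltxx.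
have [B vphiB] := imitative_rate_bounded _ _ _ _ m_gt0 (rho_rev c).1 rho_imitE vphi0.
have vphi_ge0 d : 0 <= vphi d by have [/vphi0 ->|/vphi_gt0/ltW] := lerP d 0.
pose P t := pmass (mu t) c v.
have [t1 [t1_gt0 Pt1]] : exists t1, 0 < t1 /\ 0 < P t1.
  have P0 : 0 < P 0 by apply: (pmass_gt0 _ s0) => // s; exact: ltW.
  have : P t @[t --> 0^'+] --> P 0 by apply: cvg_sumr => s; exact: cvg_coord.
  move/cvgrPdist_lt => /(_ _ P0) near0.
  have [t1 [t1_gt0 dist]] := filter_ex (filterI (nbhs_right_gt 0) near0).
  by exists t1; split => //; move: dist; rewrite ltr_distlC => /andP[+ _]; lra.
apply: (@is_derive_mul_cvg_gt0 _ P
  (fun t => imit_growth (m c) vphi (pmass (mu t) c) (F c (mu t)) v) B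
  _ _ _ t1 _ _ t1_gt0 Pt1).
- exact: is_derive_pmass_imitative.
- by move=> t /ltW t_ge0; exact: pmass_ge0 (mu_X _ t_ge0) _ _.
- move=> t /ltW t_ge0; apply: imit_growth_ge => //.
  + exact: pmass_ge0 (mu_X _ t_ge0) _.
  + exact: sum_pmass (mu_X _ t_ge0) _.
- apply: cvg_imit_growth => // w; first exact: cvg_pmass mu_lim _ _.
  exact: cvg_F F_C1 mu_X mu_lim _ _.
- apply: imit_growth_gt0 xu better => //.
  exact: pmass_ge0 (in_X_lim mu_X mu_lim) _.
- exact: cvg_pmass mu_lim _ _.
Qed.

Lemma imitative_nash_no_switch : nash_no_switch F rho mustar c.
Proof.
have mustar_X := in_X_lim mu_X mu_lim.
have best u : 0 < pmass mustar c u -> forall w, F c mustar w <= F c mustar u.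
  move=> xu w; rewrite leNgt; apply/negP => better.
  have [v _ v_max] := @arg_maxP _ _ _ u xpredT (F c mustar) isT.
  have uv : F c mustar u < F c mustar v := lt_le_trans better (v_max w isT).
  have v_rest : pmass mustar c v * imit_growth (m c) vphi (pmass mustar c) (F c mustar) v = 0.
    rewrite -net_inflow_imitative -rho_imitativeE //.
    exact: pmass_rest phi_stoch (rest_point_lim F_C1 rho_rev mu_X mu_lim mu_sol) c v.
  have G_gt0 : 0 < imit_growth (m c) vphi (pmass mustar c) (F c mustar) v.
    apply: (imit_growth_gt0 _ _ _ _ _ _ m_gt0 _ vphi0 vphi_gt0 _ xu uv) => [|w'].
    - exact: pmass_ge0 mustar_X c.
    - exact: v_max.
  have := mulr_gt0 (imitative_best_reply u v xu (fun w => v_max w isT) uv) G_gt0.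
  by rewrite v_rest ltxx.
split=> // s u' u _; have [xu'|xu'_le0] := ltP 0 (pmass mustar c u').
  by rewrite rho_imitativeE // vphi0 ?mulr0 // subr_le0 best.
by rewrite (mu_at_eq0 mustar_X) // mul0r.
Qed.

End Imitative.

Theorem corollary1 (R : realType) (C : finType) (S U : C -> finType)
  (A : forall c, S c -> finType)
  (pol : forall c, U c -> forall s : S c, A c s)
  (phi : forall c (s' : S c), A c s' -> S c -> R)
  (m Rd : C -> R)
  (F : forall c, pstate R S U -> U c -> R)
  (rho : forall c, (U c -> R) -> (U c -> R) -> U c -> U c -> R)
  (mu : R -> pstate R S U) (mustar : pstate R S U) :
  (forall c (s : S c), (0 < #|A c s|)%N) ->
  (forall c, injective (pol c)) ->
  (forall c (s' : S c) (a : A c s') (s : S c), 0 <= phi c s' a s) ->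
  (forall c (s' : S c) (a : A c s'), \sum_(s : S c) phi c s' a s = 1) ->
  (forall c, 0 < m c) ->
  (forall c, 0 < Rd c) ->
  (forall c (u : U c), exists eta, stationary pol phi c u eta /\
     forall eta', stationary pol phi c u eta' -> eta' = eta) ->
  C1_near_X m F ->
  (forall c, revision_protocol (rho c)) ->
  (forall c, imitative_comparison (m c) (rho c) \/ excess_payoff (m c) (rho c)
             \/ pairwise_comparison (rho c)) ->
  in_X m (mu 0) ->
  (forall c (s : S c) (u : U c), 0 < mu_at (mu 0) c s u) ->
  mu x @[x --> (0:R)^'+] --> mu 0 ->
  (forall t : R, 0 < t -> is_derive t 1 mu (vfield pol phi Rd F rho (mu t))) ->
  (forall t : R, 0 <= t -> in_X m (mu t)) ->
  mu t @[t --> +oo%R] --> mustar ->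
  MSNE pol phi m Rd F mustar.
Proof.
move=> _ _ _ phi_stoch m_gt0 _ _ F_C1 rho_rev families _ mu0_interior mu_right0 mu_sol
  mu_X mu_lim.
have mustar_X := in_X_lim mu_X mu_lim.
have mustar_rest := rest_point_lim F_C1 rho_rev mu_X mu_lim mu_sol.
apply: (MSNE_of_nash_no_switch mustar_X mustar_rest) => c.
have [[vphi [vphi_lip vphi0 vphi_gt0 [_ _ _ rho_imitE]]]|[rho_excess|rho_pairwise]] :=
  families c.
- exact: (imitative_nash_no_switch phi_stoch vphi_lip vphi0 vphi_gt0 rho_imitE (m_gt0 c)
    F_C1 rho_rev mu_X (mu0_interior c) mu_right0 mu_sol mu_lim).
- exact: excess_nash_no_switch mustar_X phi_stoch mustar_rest c (m_gt0 c) rho_excess.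
- exact: pairwise_nash_no_switch mustar_X phi_stoch mustar_rest c (rho_rev c) rho_pairwise.
Qed.
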